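(* (1) Let $1\le i,j\le d$ with $i\ne j$ and $m,n\in\mathbb Z_{<0}$. Then there is $\alpha\in\mathbb C\setminus\{0\}$ with $v^{ij}(m,n)\mathbf 1=\alpha\,L_r^{ii}(-1)^{-m-1}L_r^{jj}(-1)^{-n-1}L_r^{ij}(-2)\mathbf 1$ in $M_r$. (2) Let $1\le i\le d$ and $m,n\in\mathbb Z_{<0}$ with $m\le -2$, and let $1\le j\le d$ with $j\ne i$ be arbitrary. Then there is $\beta\in\mathbb C\setminus\{0\}$ with $v^{ii}(m,n)\mathbf 1=\beta\,L_r^{ii}(0)L_r^{ij}(-1)L_r^{ii}(-1)^{-n-1}L_r^{jj}(-1)^{-m-2}L_r^{ij}(-2)\mathbf 1$.
   Context: Fix an integer $d\ge 2$ and $r\in\mathbb{C}$. Let $\hat{\mathfrak h}$ be the complex Lie algebra with basis $\{v^i(m)\mid 1\le i\le d,\ m\in\mathbb{Z}\}\cup\{\mathbf c\}$ and bracket $[v^i(m),v^j(n)]=\delta_{m+n,0}\delta_{i,j}\,m\,\mathbf c$, $[\mathbf c,\hat{\mathfrak h}]=0$. In $A=U(\hat{\mathfrak h})/\langle \mathbf c-1\rangle$ let $v^{ij}(m,n)$ be the image of $v^i(m)v^j(n)$; then $v^{ij}(m,n)=v^{ji}(n,m)$ unless $i=j$ and $m=-n$, and $v^{ii}(m,-m)=v^{ii}(-m,m)+m$. Let $\mathcal B=\{v^{ii}(m,n)\mid 1\le i\le d,\ m\le n\}\cup\{v^{ij}(m,n)\mid 1\le i<j\le d,\ m,n\in\mathbb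 Z\}$; then $\mathcal B\cup\{1\}$ is linearly independent, $\mathcal L:=\mathrm{span}_{\mathbb C}\mathcal B\oplus\mathbb C\subset A$ contains every $v^{ij}(m,n)$ and is closed under $[x,y]=xy-yx$. With $\pi_1,\pi_2$ the projections of $\mathcal L$ onto $\mathrm{span}\,\mathcal B$ and onto $\mathbb C$, $[x,y]_r=\pi_1([x,y])+r\pi_2([x,y])$ is a Lie bracket on $\mathcal L$; call this Lie algebra $\mathcal L_r$. Let $\mathcal B_+=\{v^{ij}(m,n)\in\mathcal B\mid m\ge 0\text{ or }n\ge 0\}$, $\mathcal L_r^+=\mathrm{span}\,\mathcal B_+\oplus\mathbb C$, and $M_r=U(\mathcal L_r)\otimes_{U(\mathcal L_r^+)}\mathbb C\mathbf 1$, where $\mathcal B_+$ acts by $0$ on $\mathbf 1$ and $s\in\mathbb C\subset\mathcal L_r$ acts by the scalar $s$. Define operators on $M_r$: $L_r^{ij}(m)=\frac12\sum_{h\in\mathbb Z}v^{ij}(m-h,h)$ if $i\ne j$ or $m\ne0$, and $L_r^{ii}(0)=\frac12 v^{ii}(0,0)+\sum_{h>0}v^{ii}(-h,h)$ (on each vector only finitely many terms are nonzero). *)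

(* Concrete presentation of the induced module
   M_r = U(L_r) (x)_{U(L_r^+)} C1  as  T(L) / J,  where T(L) is the tensor
   algebra of L (formal linear combinations of words in symbols) and J is the
   left ideal  I + T(L).{x - chi(x) | x in L_r^+},  I the two-sided ideal
   defining U(L_r) (and the linear relations presenting L). *)
From HB Require Import structures.
From mathcomp Require Import all_boot all_order all_algebra.
Set Implicit Arguments. Unset Strict Implicit. Unset Printing Implicit Defensive.
Import Order.TTheory GRing.Theory Num.Theory.
Local Open Scope ring_scope.

Section Defs.
Variable C : numClosedFieldType.   (* the complex field (any alg. closed char 0 num field) *)
Variable d : nat.

(* index (i, j, m, n) of v^{ij}(m,n) *)
Definition idx := ('I_d * 'I_d * int * int)%type.
(* symbols of T(L): Some q = v^{ij}(m,n) (any indices), None = the element 1 of C ⊂ L *)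
Definition sym := option idx.
Definition word := seq sym.
(* formal linear combinations of words = elements of T(L) (up to [coef]-equality) *)
Definition combo := seq (C * word).

Definition coef (x : combo) (w : word) : C := \sum_(p <- x | p.2 == w) p.1.
Definition cadd (x y : combo) : combo := x ++ y.
Definition cscale (c : C) (x : combo) : combo := [seq (c * p.1, p.2) | p <- x].
Definition csub (x y : combo) : combo := cadd x (cscale (-1) y).
Definition cmul (x y : combo) : combo := [seq (p.1 * q.1, p.2 ++ q.2) | p <- x, q <- y].
Definition csum (s : seq combo) : combo := flatten s.
Definition cword (w : word) : combo := [:: (1, w)].
Definition cone : combo := cword [::].          (* the generating vector 1 *)
Definition cV (q : idx) : combo := cword [:: Some q].
Definition cK : combo := cword [:: None].

(* index of the basis element of B to which v^{ij}(m,n) is proportional *)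
Definition basidx (q : idx) : idx :=
  let: (i, j, m, n) := q in
  if (i < j)%N then q else if (j < i)%N then (j, i, n, m)
  else if m <= n then q else (i, j, n, m).

(* constant part: v^{ii}(m,-m) = v^{ii}(-m,m) + m  for m > 0 *)
Definition cst (q : idx) : int :=
  let: (i, j, m, n) := q in
  if (i == j) && (n < m) && (m + n == 0) then m else 0.

Definition in_B (q : idx) : bool :=
  let: (i, j, m, n) := q in (i < j)%N || ((i == j) && (m <= n)).

Definition in_Bplus (q : idx) : bool :=
  let: (i, j, m, n) := q in in_B q && ((0 <= m) || (0 <= n)).

Definition proj_r (r : C) (q : idx) : combo :=
  cadd (cV (basidx q)) (cscale (r * (cst q)%:~R) cK).

Definition dl (i k : 'I_d) (b c : int) (s : int) : C :=
  if (i == k) && (b + c == 0) then s%:~R else 0.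

(* [v^{ij}(a,b), v^{kl}(c,e)]_r : the commutator in A is
   d_{jk}d_{b+c,0} b v^{il}(a,e) + d_{jl}d_{b+e,0} b v^{ik}(a,c)
   + d_{ik}d_{a+c,0} a v^{lj}(e,b) + d_{il}d_{a+e,0} a v^{kj}(c,b),
   to which pi_1 + r pi_2 is applied. *)
Definition brV (r : C) (x y : idx) : combo :=
  let: (i, j, a, b) := x in let: (k, l, c, e) := y in
  cadd (cscale (dl j k b c b) (proj_r r (i, l, a, e)))
 (cadd (cscale (dl j l b e b) (proj_r r (i, k, a, c)))
 (cadd (cscale (dl i k a c a) (proj_r r (l, j, e, b)))
       (cscale (dl i l a e a) (proj_r r (k, j, c, b))))).

(* Lie bracket of L_r on symbols; the constants are central *)
Definition br (r : C) (s t : sym) : combo :=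
  match s, t with Some x, Some y => brV r x y | _, _ => [::] end.

Inductive inJ (r : C) : combo -> Prop :=
| J_zero x : (forall w, coef x w = 0) -> inJ r x
| J_ext x y : (forall w, coef x w = coef y w) -> inJ r x -> inJ r y
| J_add x y : inJ r x -> inJ r y -> inJ r (cadd x y)
| J_scale c x : inJ r x -> inJ r (cscale c x)
  (* linear relations presenting L: v^{ij}(m,n) = basis element + constant *)
| J_lin (a b : word) (q : idx) :
    inJ r (cmul (cword a) (cmul (csub (cV q) (cadd (cV (basidx q))
             (cscale (cst q)%:~R cK))) (cword b)))
| J_lie (a b : word) (s t : sym) :
    inJ r (cmul (cword a) (cmul (csub (csub (cword [:: s; t]) (cword [:: t; s]))
             (br r s t)) (cword b)))
| J_Bplus (a : word) (q : idx) : in_Bplus q -> inJ r (cmul (cword a) (cV q))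
  (* the constant s in C ⊂ L_r acts by s on 1 (it suffices for s = 1) *)
| J_K (a : word) : inJ r (cmul (cword a) (csub cK cone)).

Definition eqM (r : C) (x y : combo) : Prop := inJ r (csub x y).

(* y = L_r^{ij}(m) x in M_r (only finitely many terms of the sum are nonzero) *)
Definition Lop (r : C) (i j : 'I_d) (m : int) (x y : combo) : Prop :=
  if (i == j) && (m == 0) then
    exists N : nat,
      (forall h : int, N%:Z < h -> eqM r (cmul (cV (i, i, - h, h)) x) [::]) /\
      eqM r y (cadd (cscale 2^-1 (cmul (cV (i, i, 0, 0)) x))
                    (csum [seq cmul (cV (i, i, - (k.+1)%:Z, (k.+1)%:Z)) x
                          | k <- iota 0 N]))
  else
    exists N : nat,
      (forall h : int, N%:Z < `|h| -> eqM r (cmul (cV (i, j, m - h, h)) x) [::]) /\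
      eqM r y (cscale 2^-1 (csum [seq cmul (cV (i, j, m - h, h)) x
                          | h <- [seq k%:Z - N%:Z | k <- iota 0 (2 * N).+1]])).

Fixpoint Lpow (r : C) (i j : 'I_d) (m : int) (k : nat) (x y : combo) : Prop :=
  match k with
  | 0%N => eqM r x y
  | k'.+1 => exists z, Lop r i j m x z /\ Lpow r i j m k' z y
  end.

End Defs.

From HB Require Import structures.
From mathcomp Require Import all_boot all_order all_algebra.
From mathcomp Require Import zify ring.
Import Order.TTheory GRing.Theory Num.Theory.
Local Open Scope ring_scope.
Set Implicit Arguments. Unset Strict Implicit.

(* Since v^{kl}(a,b) 1 = 0 whenever a >= 0 or b >= 0 (unless k = l and
   a + b = 0), an operator L^{kl}(p) applied to a vector v^q 1 whose modes
   are negative reduces to a finite sum of brackets [v^{kl}(p-h,h), v^q]_r 1,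
   and only the terms in which a mode of one factor cancels a mode of the
   other survive.  Thus L^{ij}(-2) 1 = v^{ij}(-1,-1) 1 / 2, L^{jj}(-1) lowers
   the second mode of v^{ij}(a,b) 1 with factor -b and L^{ii}(-1) its first
   mode with factor -a, L^{ij}(-1) v^{ij}(a,b) 1 equals
   (-b v^{ii}(b-1,a) - a v^{jj}(b,a-1)) 1 / 2, and L^{ii}(0) kills
   v^{jj}(.,.) 1 and multiplies v^{ii}(m,n) 1 by -m-n.  Chaining these steps
   from v^{ij}(-1,-1) 1 only ever multiplies by nonzero scalars. *)

Section InducedModule.
Variables (C : numClosedFieldType) (d : nat) (r : C).
Local Notation combo := (combo C d).
Local Notation word := (word d).
Local Notation idx := (idx d).
Local Notation vac := (cone C d).

Definition ceq (x y : combo) := forall w, coef x w = coef y w.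

Definition vvac (q : idx) : combo := cmul (cV C q) vac.

Definition window (N : nat) : seq int := [seq k%:Z - N%:Z | k <- iota 0 (2 * N).+1].

Lemma coefE (x : combo) w : coef x w = \sum_(p <- x) (p.2 == w)%:R * p.1.
Proof.
rewrite /coef big_mkcond; apply: eq_bigr => p _.
by case: eqP => _; rewrite ?mul1r ?mul0r.
Qed.

Lemma coef_cadd (x y : combo) w : coef (cadd x y) w = coef x w + coef y w.
Proof. by rewrite /coef /cadd big_cat. Qed.

Lemma coef_cscale c (x : combo) w : coef (cscale c x) w = c * coef x w.
Proof. by rewrite /coef /cscale big_map mulr_sumr. Qed.

Lemma coef_nil w : coef ([::] : combo) w = 0.
Proof. by rewrite /coef big_nil. Qed.

Lemma coef_cmul (x y : combo) w : coef (cmul x y) w =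
  \sum_(p <- x) \sum_(q <- y) (p.2 ++ q.2 == w)%:R * (p.1 * q.1).
Proof. by rewrite coefE /cmul big_allpairs_dep. Qed.

Lemma coef_csum (s : seq combo) w : coef (csum s) w = \sum_(x <- s) coef x w.
Proof.
elim: s => [|x s IH]; first by rewrite big_nil coef_nil.
by rewrite big_cons -IH; exact: coef_cadd.
Qed.

Lemma cmul_cwordE (u : word) (y : combo) :
  cmul (cword C u) y = [seq (1 * q.1, u ++ q.2) | q <- y].
Proof. by rewrite /cmul /cword /= cats0. Qed.

Lemma cmul_cwordA (u v : word) (y : combo) :
  cmul (cword C u) (cmul (cword C v) y) = cmul (cword C (u ++ v)) y.
Proof.
rewrite !cmul_cwordE -map_comp; apply: eq_map => q /=.
by rewrite mul1r catA.
Qed.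

Lemma eq_cat_take_drop (T : eqType) (u s w : seq T) :
  (u ++ s == w) = (take (size u) w == u) && (s == drop (size u) w).
Proof.
apply/eqP/andP => [<-|[/eqP Ht /eqP Hd]]; first by rewrite take_size_cat // drop_size_cat.
by rewrite -[RHS](cat_take_drop (size u)) Ht Hd.
Qed.

Lemma coef_cmul_cword (u : word) (y : combo) w :
  coef (cmul (cword C u) y) w = (take (size u) w == u)%:R * coef y (drop (size u) w).
Proof.
rewrite cmul_cwordE coefE big_map coefE mulr_sumr; apply: eq_bigr => q _ /=.
by rewrite eq_cat_take_drop mul1r; case: (take _ _ == u); rewrite ?mul1r ?mul0r.
Qed.

Lemma coef_cmul_nil_l (y : combo) w : coef (cmul (cword C [::]) y) w = coef y w.
Proof. by rewrite coef_cmul_cword take0 drop0 eqxx mul1r. Qed.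

Lemma coef_cmul_nil_r (x : combo) w : coef (cmul x (cword C [::])) w = coef x w.
Proof.
rewrite coef_cmul coefE; apply: eq_bigr => p _.
by rewrite big_cons big_nil addr0 cats0 mulr1.
Qed.

Lemma coef_cmul_caddl (x x' y : combo) w :
  coef (cmul (cadd x x') y) w = coef (cmul x y) w + coef (cmul x' y) w.
Proof. by rewrite !coef_cmul /cadd big_cat. Qed.

Lemma coef_cmul_cscalel c (x y : combo) w :
  coef (cmul (cscale c x) y) w = c * coef (cmul x y) w.
Proof.
rewrite !coef_cmul /cscale big_map mulr_sumr; apply: eq_bigr => p _.
by rewrite mulr_sumr; apply: eq_bigr => q _ /=; ring.
Qed.

Lemma inJ_lmul (u : word) (x : combo) : inJ r x -> inJ r (cmul (cword C u) x).
Proof.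
elim=> {x}.
- by move=> x Hx; apply: J_zero => w; rewrite coef_cmul_cword Hx mulr0.
- by move=> x y Hxy _ IH; apply: J_ext IH => w; rewrite !coef_cmul_cword Hxy.
- move=> x y _ IH1 _ IH2; apply: J_ext (J_add IH1 IH2) => w.
  by rewrite !(coef_cmul_cword, coef_cadd) mulrDr.
- move=> c x _ IH; apply: J_ext (J_scale c IH) => w.
  by rewrite !(coef_cmul_cword, coef_cscale) mulrCA.
- by move=> a b q; rewrite cmul_cwordA; apply: J_lin.
- by move=> a b s t; rewrite cmul_cwordA; apply: J_lie.
- by move=> a q H; rewrite cmul_cwordA; apply: J_Bplus.
- by move=> a; rewrite cmul_cwordA; apply: J_K.
Qed.

Lemma inJ_ceq (x y : combo) : ceq x y -> inJ r y -> inJ r x.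
Proof. by move=> H; apply: J_ext => w; rewrite H. Qed.

Lemma eqM_ceq (x y : combo) : ceq x y -> eqM r x y.
Proof. by move=> H; apply: J_zero => w; rewrite /csub coef_cadd coef_cscale H; ring. Qed.

Lemma eqM_refl (x : combo) : eqM r x x.
Proof. exact: eqM_ceq. Qed.

Lemma eqM_sym (x y : combo) : eqM r x y -> eqM r y x.
Proof.
move=> H; apply: inJ_ceq (J_scale (-1) H) => w.
by rewrite /csub !(coef_cadd, coef_cscale); ring.
Qed.

Lemma eqM_trans (x y z : combo) : eqM r x y -> eqM r y z -> eqM r x z.
Proof.
move=> H1 H2; apply: inJ_ceq (J_add H1 H2) => w.
by rewrite /csub !(coef_cadd, coef_cscale); ring.
Qed.

Lemma eqM_ceqL (x y z : combo) : ceq x y -> eqM r y z -> eqM r x z.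
Proof. by move=> H; apply: eqM_trans; apply: eqM_ceq. Qed.

Lemma eqM_add (x x' y y' : combo) :
  eqM r x x' -> eqM r y y' -> eqM r (cadd x y) (cadd x' y').
Proof.
move=> H1 H2; apply: inJ_ceq (J_add H1 H2) => w.
by rewrite /csub !(coef_cadd, coef_cscale); ring.
Qed.

Lemma eqM_scale c (x y : combo) : eqM r x y -> eqM r (cscale c x) (cscale c y).
Proof.
move=> H; apply: inJ_ceq (J_scale c H) => w.
by rewrite /csub !(coef_cadd, coef_cscale); ring.
Qed.

Lemma eqM_scale_nz c (x y : combo) :
  (c != 0 -> eqM r x y) -> eqM r (cscale c x) (cscale c y).
Proof.
have [->|c0] := eqVneq c 0 => H; last exact/eqM_scale/H.
by apply: eqM_ceq => w; rewrite !coef_cscale !mul0r.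
Qed.

Lemma eqM_lmul (u : word) (x y : combo) :
  eqM r x y -> eqM r (cmul (cword C u) x) (cmul (cword C u) y).
Proof.
move=> H; apply: inJ_ceq (inJ_lmul u H) => w.
by rewrite /csub !(coef_cadd, coef_cscale, coef_cmul_cword); ring.
Qed.

Lemma eqM_csum_map (T : Type) (F G : T -> combo) (s : seq T) :
  (forall h, eqM r (F h) (G h)) ->
  eqM r (csum [seq F h | h <- s]) (csum [seq G h | h <- s]).
Proof.
move=> HFG; elim: s => [|h s IH] /=; first exact: eqM_refl.
exact: eqM_add (HFG h) IH.
Qed.

Lemma ceq_cV_cscale (q : idx) c (y : combo) :
  ceq (cmul (cV C q) (cscale c y)) (cscale c (cmul (cV C q) y)).
Proof. by move=> w; rewrite !(coef_cmul_cword, coef_cscale) mulrCA. Qed.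

Lemma ceq_cV_lin (q : idx) (s1 s2 : C) (y z : combo) :
  ceq (cmul (cV C q) (cadd (cscale s1 y) (cscale s2 z)))
      (cadd (cscale s1 (cmul (cV C q) y)) (cscale s2 (cmul (cV C q) z))).
Proof. by move=> w; rewrite !(coef_cmul_cword, coef_cadd, coef_cscale); ring. Qed.

Lemma eqM_K_vac : eqM r (cmul (cK C d) vac) vac.
Proof.
apply: inJ_ceq (J_K r [::]) => w.
by rewrite /cone /csub !(coef_cmul_nil_l, coef_cmul_nil_r, coef_cadd, coef_cscale).
Qed.

Lemma vvac_basidx q :
  eqM r (vvac q) (cadd (vvac (basidx q)) (cscale (cst q)%:~R vac)).
Proof.
apply: (@eqM_trans _ (cadd (vvac (basidx q)) (cscale (cst q)%:~R (cmul (cK C d) vac)))).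
  apply: inJ_ceq (J_lin r [::] [::] q) => w.
  by rewrite /vvac /cone /csub
    !(coef_cmul_nil_l, coef_cmul_nil_r, coef_cadd, coef_cscale).
exact/eqM_add/eqM_scale/eqM_K_vac/eqM_refl.
Qed.

Lemma cV_vvac X Y : eqM r (cmul (cV C X) (vvac Y))
  (cadd (cmul (cV C Y) (vvac X)) (cmul (br r (Some X) (Some Y)) vac)).
Proof.
apply: inJ_ceq (J_lie r [::] [::] (Some X) (Some Y)) => w.
rewrite /vvac /cone /cV !cmul_cwordA !cat1s.
by rewrite /csub !(coef_cmul_nil_l, coef_cmul_nil_r, coef_cadd, coef_cscale); ring.
Qed.

Lemma vvac_Bplus q : in_Bplus q -> eqM r (vvac q) [::].
Proof.
move=> H; apply: inJ_ceq (J_Bplus r [::] H) => w.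
by rewrite /vvac /cone /csub
  !(coef_cmul_nil_l, coef_cmul_nil_r, coef_cadd, coef_cscale, coef_nil) mulr0 addr0.
Qed.

Lemma cst_eq0 (i j : 'I_d) (a b : int) :
  (i != j) || (a + b != 0) -> cst (i, j, a, b) = 0.
Proof.
move=> H /=; case: ifP => // /andP[/andP[/eqP eij _] /eqP s].
by move: H; rewrite eij s !eqxx.
Qed.

Lemma basidx_sym (i j : 'I_d) (a b : int) : basidx (i, j, a, b) = basidx (j, i, b, a).
Proof.
rewrite /basidx; case: (ltngtP i j) => // /val_inj eij; subst j.
by case: (ltgtP a b) => [_|_|->].
Qed.

Lemma in_Bplus_basidx (i j : 'I_d) (a b : int) :
  (0 <= a) || (0 <= b) -> in_Bplus (basidx (i, j, a, b)).
Proof.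
move=> H; rewrite /basidx; case: (ltngtP i j) => [h|h|/val_inj eij].
- by rewrite /in_Bplus /in_B h.
- by rewrite /in_Bplus /in_B h /= orbC.
subst j; case: (lerP a b) => hab; rewrite /in_Bplus /in_B ltnn eqxx /=.
  by rewrite hab.
by rewrite (ltW hab) /= orbC.
Qed.

Lemma vvac_eq0 (i j : 'I_d) (a b : int) :
  (0 <= a) || (0 <= b) -> (i != j) || (a + b != 0) -> eqM r (vvac (i, j, a, b)) [::].
Proof.
move=> H1 H2; apply: eqM_trans (vvac_basidx _) _; rewrite cst_eq0 //.
apply: eqM_trans (eqM_add (vvac_Bplus (in_Bplus_basidx i j H1)) (eqM_refl _)) _.
by apply: eqM_ceq => w; rewrite !(coef_cadd, coef_cscale, coef_nil) mul0r addr0.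
Qed.

Lemma vvac_sym (i j : 'I_d) (a b : int) :
  (i != j) || (a + b != 0) -> eqM r (vvac (i, j, a, b)) (vvac (j, i, b, a)).
Proof.
move=> H; apply: eqM_trans (vvac_basidx _) _; rewrite cst_eq0 // basidx_sym.
apply: eqM_sym; apply: eqM_trans (vvac_basidx _) _.
by rewrite cst_eq0; [exact: eqM_refl | rewrite eq_sym addrC].
Qed.

Lemma cV_vvac_ann X Y : eqM r (vvac X) [::] ->
  eqM r (cmul (cV C X) (vvac Y)) (cmul (br r (Some X) (Some Y)) vac).
Proof.
move=> H; apply: eqM_trans (cV_vvac X Y) _.
apply: eqM_trans (eqM_add (eqM_lmul [:: Some Y] H) (eqM_refl _)) _.
by apply: eqM_ceq => w; rewrite !(coef_cadd, coef_cmul_cword, coef_nil) mulr0 add0r.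
Qed.

Lemma proj_r_vac (c : C) q : c = 0 \/ cst q = 0 ->
  eqM r (cscale c (cmul (proj_r r q) vac)) (cscale c (vvac q)).
Proof.
case=> [->|Hc]; first by apply: eqM_ceq => w; rewrite !coef_cscale !mul0r.
apply/eqM_scale/eqM_sym; apply: eqM_trans (vvac_basidx _) _; rewrite Hc.
apply: eqM_ceq => w; rewrite /proj_r Hc.
by rewrite !(coef_cadd, coef_cscale, coef_cmul_caddl, coef_cmul_cscalel) !mulr0 !mul0r.
Qed.

Lemma br_vac (i j k l : 'I_d) (a b c e : int) :
  dl C j k b c b = 0 \/ cst (i, l, a, e) = 0 ->
  dl C j l b e b = 0 \/ cst (i, k, a, c) = 0 ->
  dl C i k a c a = 0 \/ cst (l, j, e, b) = 0 ->
  dl C i l a e a = 0 \/ cst (k, j, c, b) = 0 ->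
  eqM r (cmul (br r (Some (i, j, a, b)) (Some (k, l, c, e))) vac)
    (cadd (cscale (dl C j k b c b) (vvac (i, l, a, e)))
    (cadd (cscale (dl C j l b e b) (vvac (i, k, a, c)))
    (cadd (cscale (dl C i k a c a) (vvac (l, j, e, b)))
          (cscale (dl C i l a e a) (vvac (k, j, c, b)))))).
Proof.
move=> H1 H2 H3 H4.
apply: (@eqM_ceqL _
  (cadd (cscale (dl C j k b c b) (cmul (proj_r r (i, l, a, e)) vac))
  (cadd (cscale (dl C j l b e b) (cmul (proj_r r (i, k, a, c)) vac))
  (cadd (cscale (dl C i k a c a) (cmul (proj_r r (l, j, e, b)) vac))
        (cscale (dl C i l a e a) (cmul (proj_r r (k, j, c, b)) vac)))))).
  by move=> w; rewrite /br /brV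
    !(coef_cmul_caddl, coef_cmul_cscalel, coef_cadd, coef_cscale).
by do 3 (apply: eqM_add; first exact: proj_r_vac); exact: proj_r_vac.
Qed.

Lemma dl_neq (i k : 'I_d) (b c s : int) : i != k -> dl C i k b c s = 0.
Proof. by move=> H; rewrite /dl (negbTE H). Qed.

Lemma dl_eq (i : 'I_d) (b c s : int) :
  dl C i i b c s = if b + c == 0 then s%:~R else 0.
Proof. by rewrite /dl eqxx. Qed.

Lemma dl_eq0_or (i : 'I_d) (b c s : int) (P : Prop) :
  (b + c == 0 -> P) -> dl C i i b c s = 0 \/ P.
Proof. by move=> H; rewrite dl_eq; case: ifP => h; [right; apply: H | left]. Qed.

Lemma mem_window (N : nat) (p : int) : `|p| <= N%:Z -> p \in window N.
Proof.
move=> H; apply/mapP; exists (absz (p + N%:Z)); last by lia.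
by rewrite mem_iota; lia.
Qed.

Lemma uniq_window (N : nat) : uniq (window N).
Proof.
rewrite map_inj_uniq ?iota_uniq // => x y /addIr.
by case.
Qed.

Lemma big_pick (s : seq int) (p : int) (F : int -> C) : uniq s -> p \in s ->
  \sum_(h <- s) (if h == p then F h else 0) = F p.
Proof.
by move=> U M; rewrite -big_mkcond -big_filter filter_pred1_uniq // big_seq1.
Qed.

Lemma sum_window_dl (i : 'I_d) (N : nat) (b : int) : `|b| <= N%:Z ->
  \sum_(h <- window N) dl C i i h b h = (- b)%:~R.
Proof.
move=> Hb; rewrite (eq_bigr (fun h => if h == - b then h%:~R else 0)) => [|h _].
  by rewrite big_pick ?uniq_window //; apply: mem_window; lia.
by rewrite dl_eq addr_eq0.
Qed.

Lemma sum_window_dl_refl (i : 'I_d) (N : nat) (a : int) : `|a - 1| <= N%:Z ->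
  \sum_(h <- window N) dl C i i (-1 - h) a (-1 - h) = (- a)%:~R.
Proof.
move=> Ha; rewrite (eq_bigr (fun h => if h == a - 1 then (-1 - h)%:~R else 0)).
  rewrite big_pick ?uniq_window ?mem_window //.
  by have -> : -1 - (a - 1) = - a by lia.
move=> h _; rewrite dl_eq (_ : (-1 - h + a == 0) = (h == a - 1)) //.
by apply/eqP/eqP; lia.
Qed.

Lemma neg_intr_neq0 (b : int) : b < 0 -> (- b)%:~R != 0 :> C.
Proof. by move=> b0; rewrite intr_eq0 oppr_eq0; apply/eqP; lia. Qed.

Lemma Lop_eqM (i j : 'I_d) (m : int) (x x' y y' : combo) :
  eqM r x x' -> eqM r y y' -> Lop r i j m x y -> Lop r i j m x' y'.
Proof.
move=> Hx Hy; rewrite /Lop; case: ifP => _ [N [H1 H2]]; exists N; split.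
- by move=> h Hh; apply: eqM_trans (eqM_lmul _ (eqM_sym Hx)) (H1 h Hh).
- apply: eqM_trans (eqM_sym Hy) _; apply: eqM_trans H2 _.
  apply: eqM_add; first exact/eqM_scale/eqM_lmul.
  by apply: eqM_csum_map => k; apply: eqM_lmul.
- by move=> h Hh; apply: eqM_trans (eqM_lmul _ (eqM_sym Hx)) (H1 h Hh).
- apply: eqM_trans (eqM_sym Hy) _; apply: eqM_trans H2 _.
  by apply: eqM_scale; apply: eqM_csum_map => k; apply: eqM_lmul.
Qed.

Lemma Lop_two_terms (i j : 'I_d) (m : int) (x : combo) (N : nat)
    (g1 g2 : int -> C) (X1 X2 : combo) :
  ~~ ((i == j) && (m == 0)) ->
  (forall h, eqM r (cmul (cV C (i, j, m - h, h)) x)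
                   (cadd (cscale (g1 h) X1) (cscale (g2 h) X2))) ->
  (forall h, N%:Z < `|h| -> g1 h = 0 /\ g2 h = 0) ->
  Lop r i j m x (cadd (cscale (2^-1 * \sum_(h <- window N) g1 h) X1)
                      (cscale (2^-1 * \sum_(h <- window N) g2 h) X2)).
Proof.
move=> Hn Hf Hz; rewrite /Lop (negbTE Hn); exists N; split.
  move=> h Hh; apply: eqM_trans (Hf h) _; case: (Hz h Hh) => -> ->.
  by apply: eqM_ceq => w; rewrite !(coef_cadd, coef_cscale, coef_nil) !mul0r addr0.
apply: eqM_sym; apply: eqM_trans (eqM_scale _ (eqM_csum_map _ Hf)) _.
apply: eqM_ceq => w; rewrite coef_cscale coef_csum big_map !(coef_cadd, coef_cscale).
under eq_bigr => h _ do rewrite coef_cadd !coef_cscale.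
by rewrite big_split -!mulr_suml /=; ring.
Qed.

Lemma Lop0_one_term (i : 'I_d) (x : combo) (N : nat) (g : int -> C) (X : combo) :
  eqM r (cmul (cV C (i, i, 0, 0)) x) (cscale (g 0) X) ->
  (forall h, 0 < h -> eqM r (cmul (cV C (i, i, - h, h)) x) (cscale (g h) X)) ->
  (forall h, N%:Z < h -> g h = 0) ->
  Lop r i i 0 x (cscale (2^-1 * g 0 + \sum_(k <- iota 0 N) g (k.+1)%:Z) X).
Proof.
move=> H0 Hf Hz; rewrite /Lop !eqxx /=; exists N; split.
  move=> h Hh; have h0 : 0 < h by apply: le_lt_trans Hh.
  apply: eqM_trans (Hf h h0) _; rewrite Hz //.
  by apply: eqM_ceq => w; rewrite !(coef_cscale, coef_nil) !mul0r.
apply: eqM_sym.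
apply: eqM_trans
  (eqM_add (eqM_scale _ H0) (eqM_csum_map _ (fun k : nat => Hf (k.+1)%:Z isT))) _.
apply: eqM_ceq => w; rewrite coef_cadd coef_csum big_map !coef_cscale.
under eq_bigr => h _ do rewrite coef_cscale.
by rewrite -!mulr_suml /=; ring.
Qed.

Lemma Lpow_lower (i j : 'I_d) (m : int) (f : int -> combo) :
  (forall (b : int) (c : C), b < 0 ->
     Lop r i j m (cscale c (f b)) (cscale (c * (- b)%:~R) (f (b - 1)))) ->
  forall (k : nat) (c : C) (b : int), c != 0 -> b < 0 ->
  exists2 c' : C, c' != 0 & Lpow r i j m k (cscale c (f b)) (cscale c' (f (b - k%:Z))).
Proof.
move=> Hstep; elim=> [|k IH] c b c0 b0.
  by exists c => //; rewrite subr0; apply: eqM_refl.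
have b1 : b - 1 < 0 by lia.
have [c' c'0 HL] := IH _ _ (mulf_neq0 c0 (neg_intr_neq0 b0)) b1.
exists c' => //; exists (cscale (c * (- b)%:~R) (f (b - 1))); split; first exact: Hstep.
by have -> : b - (k.+1)%:Z = b - 1 - k%:Z by lia.
Qed.

Section DistinctIndices.
Variables i j : 'I_d.
Hypothesis neq_ij : i != j.

Let neq_ji : j != i. Proof. by rewrite eq_sym. Qed.

Lemma Lij_vac : Lop r i j (-2) vac (cscale 2^-1 (vvac (i, j, -1, -1))).
Proof.
have L := @Lop_two_terms i j (-2) vac 1 (fun h => if h == -1 then 1 else 0)
  (fun _ => 0) (vvac (i, j, -1, -1)) [::].
apply: Lop_eqM (eqM_refl _) _ (L _ _ _).
- rewrite big_pick ?uniq_window ?mem_window //.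
  by apply: eqM_ceq => w; rewrite !(coef_cadd, coef_cscale, coef_nil) mulr0 addr0 mulr1.
- by rewrite (negbTE neq_ij).
- move=> h; case: ifP => [/eqP -> | /negbT/eqP hn].
    by apply: eqM_ceq => w; rewrite !(coef_cadd, coef_cscale, coef_nil) mulr0 addr0 mul1r.
  apply: eqM_trans (vvac_eq0 _ _) _; [lia | by rewrite neq_ij |].
  by apply: eqM_ceq => w; rewrite !(coef_cadd, coef_cscale, coef_nil) mulr0 mul0r addr0.
- by move=> h Hh; split => //; rewrite ifF //; apply/negbTE/eqP; lia.
Qed.

Lemma vjj_vij (a b : int) (c : C) (h : int) :
  eqM r (cmul (cV C (j, j, -1 - h, h)) (cscale c (vvac (i, j, a, b))))
    (cadd (cscale (c * (dl C j j h b h + dl C j j (-1 - h) b (-1 - h)))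
                  (vvac (i, j, a, b - 1)))
          (cscale 0 [::])).
Proof.
apply: eqM_ceqL (ceq_cV_cscale _ _ _) _.
have Z : eqM r (vvac (j, j, -1 - h, h)) [::] by apply: vvac_eq0; rewrite ?eqxx /=; lia.
apply: eqM_trans (eqM_scale _ (cV_vvac_ann _ Z)) _.
apply: eqM_trans (eqM_scale _ (br_vac _ _ _ _)) _.
- by left; rewrite dl_neq.
- by right; rewrite cst_eq0 // neq_ji.
- by left; rewrite dl_neq.
- by right; rewrite cst_eq0 // neq_ij.
rewrite !(dl_neq _ _ _ neq_ji).
apply: eqM_trans (eqM_scale _ (eqM_add (eqM_refl _) (eqM_add
   (eqM_scale_nz (y := vvac (i, j, a, b - 1)) _) (eqM_add (eqM_refl _)
   (eqM_scale_nz (y := vvac (i, j, a, b - 1)) _))))) _.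
- rewrite dl_eq; case: ifP => [/eqP hb _|]; last by rewrite eqxx.
  have -> : -1 - h = b - 1 by lia.
  by apply: vvac_sym; rewrite neq_ji.
- rewrite dl_eq; case: ifP => [/eqP hb _|]; last by rewrite eqxx.
  have -> : h = b - 1 by lia.
  exact: eqM_refl.
by apply: eqM_ceq => w; rewrite !(coef_cadd, coef_cscale, coef_nil); ring.
Qed.

Lemma Ljj_vij (a b : int) (c : C) : b < 0 ->
  Lop r j j (-1) (cscale c (vvac (i, j, a, b)))
                 (cscale (c * (- b)%:~R) (vvac (i, j, a, b - 1))).
Proof.
move=> b0.
have L := @Lop_two_terms j j (-1) _ (absz b).+1
  (fun h => c * (dl C j j h b h + dl C j j (-1 - h) b (-1 - h))) (fun _ => 0)
  (vvac (i, j, a, b - 1)) [::] _ (vjj_vij a b c).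
apply: Lop_eqM (eqM_refl _) _ (L _ _).
- rewrite -mulr_sumr big_split sum_window_dl ?sum_window_dl_refl; try lia.
  apply: eqM_ceq => w; rewrite !(coef_cadd, coef_cscale, coef_nil) mulr0 addr0.
  have h2 : (2 : C) != 0 by rewrite pnatr_eq0.
  by rewrite /=; field.
- by rewrite eqxx.
- move=> h Hh; split => //.
  have H1 : (h + b == 0) = false by apply/negbTE/eqP; lia.
  have H2 : (-1 - h + b == 0) = false by apply/negbTE/eqP; lia.
  by rewrite !dl_eq H1 H2 addr0 mulr0.
Qed.

Lemma vij_vij (a b : int) (c : C) (h : int) : a < 0 -> b < 0 ->
  eqM r (cmul (cV C (i, j, -1 - h, h)) (cscale c (vvac (i, j, a, b))))
    (cadd (cscale (c * dl C j j h b h) (vvac (i, i, b - 1, a)))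
          (cscale (c * dl C i i (-1 - h) a (-1 - h)) (vvac (j, j, b, a - 1)))).
Proof.
move=> a0 b0; apply: eqM_ceqL (ceq_cV_cscale _ _ _) _.
have Z : eqM r (vvac (i, j, -1 - h, h)) [::] by apply: vvac_eq0; rewrite ?neq_ij //=; lia.
apply: eqM_trans (eqM_scale _ (cV_vvac_ann _ Z)) _.
apply: eqM_trans (eqM_scale _ (br_vac _ _ _ _)) _.
- by left; rewrite dl_neq.
- by apply: dl_eq0_or => /eqP hb; rewrite cst_eq0 // eqxx /=; apply/eqP; lia.
- by apply: dl_eq0_or => /eqP hb; rewrite cst_eq0 // eqxx /=; apply/eqP; lia.
- by left; rewrite dl_neq.
rewrite (dl_neq _ _ _ neq_ji) (dl_neq _ _ _ neq_ij).
apply: eqM_trans (eqM_scale _ (eqM_add (eqM_refl _) (eqM_add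
   (eqM_scale_nz (y := vvac (i, i, b - 1, a)) _) (eqM_add
   (eqM_scale_nz (y := vvac (j, j, b, a - 1)) _) (eqM_refl _))))) _.
- rewrite dl_eq; case: ifP => [/eqP hb _|]; last by rewrite eqxx.
  have -> : -1 - h = b - 1 by lia.
  exact: eqM_refl.
- rewrite dl_eq; case: ifP => [/eqP hb _|]; last by rewrite eqxx.
  have -> : h = a - 1 by lia.
  exact: eqM_refl.
by apply: eqM_ceq => w; rewrite !(coef_cadd, coef_cscale, coef_nil); ring.
Qed.

Lemma Lij_vij (a b : int) (c : C) : a < 0 -> b < 0 ->
  Lop r i j (-1) (cscale c (vvac (i, j, a, b)))
    (cadd (cscale (2^-1 * (c * (- b)%:~R)) (vvac (i, i, b - 1, a)))
          (cscale (2^-1 * (c * (- a)%:~R)) (vvac (j, j, b, a - 1)))).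
Proof.
move=> a0 b0.
have L := @Lop_two_terms i j (-1) _ (absz a + absz b).+1
  (fun h => c * dl C j j h b h) (fun h => c * dl C i i (-1 - h) a (-1 - h))
  (vvac (i, i, b - 1, a)) (vvac (j, j, b, a - 1)) _ (fun h => vij_vij c h a0 b0).
apply: Lop_eqM (eqM_refl _) _ (L _ _).
- rewrite -!mulr_sumr sum_window_dl ?sum_window_dl_refl; try lia.
  exact: eqM_refl.
- by rewrite (negbTE neq_ij).
- move=> h Hh.
  have H1 : (h + b == 0) = false by apply/negbTE/eqP; lia.
  have H2 : (-1 - h + a == 0) = false by apply/negbTE/eqP; lia.
  by rewrite !dl_eq H1 H2 !mulr0.
Qed.

Lemma vii_mix (m n b' a' : int) (s1 s2 : C) (h : int) : m < 0 -> n < 0 -> 0 <= h ->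
  eqM r (cmul (cV C (i, i, - h, h))
              (cadd (cscale s1 (vvac (i, i, m, n))) (cscale s2 (vvac (j, j, b', a')))))
    (cscale (s1 * (dl C i i h m h + dl C i i h n h)) (vvac (i, i, m, n))).
Proof.
move=> m0 n0 h0; apply: eqM_ceqL (ceq_cV_lin _ _ _ _ _) _.
have Z : eqM r (vvac (i, i, - h, h)) [::].
  by apply: vvac_Bplus; rewrite /in_Bplus /in_B ltnn eqxx /=; lia.
have Hii : eqM r (cmul (cV C (i, i, - h, h)) (vvac (i, i, m, n)))
    (cscale (dl C i i h m h + dl C i i h n h) (vvac (i, i, m, n))).
  apply: eqM_trans (cV_vvac_ann _ Z) _.
  have D3 : dl C i i (- h) m (- h) = 0 by rewrite dl_eq ifF //; apply/negbTE/eqP; lia.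
  have D4 : dl C i i (- h) n (- h) = 0 by rewrite dl_eq ifF //; apply/negbTE/eqP; lia.
  apply: eqM_trans (br_vac _ _ _ _) _; rewrite ?D3 ?D4; try by left.
  - by apply: dl_eq0_or => /eqP hb; rewrite cst_eq0 // eqxx /=; apply/eqP; lia.
  - by apply: dl_eq0_or => /eqP hb; rewrite cst_eq0 // eqxx /=; apply/eqP; lia.
  apply: eqM_trans (eqM_add (eqM_scale_nz (y := vvac (i, i, m, n)) _)
     (eqM_add (eqM_scale_nz (y := vvac (i, i, m, n)) _) (eqM_refl _))) _.
  - rewrite dl_eq; case: ifP => [/eqP hb _|]; last by rewrite eqxx.
    have -> : - h = m by lia.
    exact: eqM_refl.
  - rewrite dl_eq; case: ifP => [/eqP hb _|]; last by rewrite eqxx.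
    have -> : - h = n by lia.
    by apply: vvac_sym; rewrite eqxx /=; apply/eqP; lia.
  by apply: eqM_ceq => w; rewrite !(coef_cadd, coef_cscale, coef_nil); ring.
have Hjj : eqM r (cmul (cV C (i, i, - h, h)) (vvac (j, j, b', a'))) [::].
  apply: eqM_trans (cV_vvac_ann _ Z) _.
  apply: eqM_trans (br_vac _ _ _ _) _; try by left; rewrite dl_neq.
  rewrite !(dl_neq _ _ _ neq_ij).
  by apply: eqM_ceq => w; rewrite !(coef_cadd, coef_cscale, coef_nil); ring.
apply: eqM_trans (eqM_add (eqM_scale s1 Hii) (eqM_scale s2 Hjj)) _.
by apply: eqM_ceq => w; rewrite !(coef_cadd, coef_cscale, coef_nil) mulr0 addr0 mulrA.
Qed.

Lemma sum_iota_dl (N : nat) (p : int) : p < 0 -> (absz p <= N)%N ->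
  \sum_(k <- iota 0 N) dl C i i (k.+1)%:Z p (k.+1)%:Z = (- p)%:~R.
Proof.
move=> p0 pN.
rewrite -(big_map (fun k : nat => (k.+1)%:Z) xpredT (fun h => dl C i i h p h)).
rewrite (eq_bigr (fun h => if h == - p then h%:~R else 0)) => [|h _]; last first.
  by rewrite dl_eq addr_eq0.
rewrite big_pick //.
  by rewrite map_inj_uniq ?iota_uniq // => x y [].
by apply/mapP; exists (absz p).-1; [rewrite mem_iota | ]; lia.
Qed.

Lemma Lii0_mix (m n b' a' : int) (s1 s2 : C) : m < 0 -> n < 0 ->
  Lop r i i 0 (cadd (cscale s1 (vvac (i, i, m, n))) (cscale s2 (vvac (j, j, b', a'))))
    (cscale (s1 * ((- m)%:~R + (- n)%:~R)) (vvac (i, i, m, n))).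
Proof.
move=> m0 n0.
have L := @Lop0_one_term i
  (cadd (cscale s1 (vvac (i, i, m, n))) (cscale s2 (vvac (j, j, b', a')))) (absz m + absz n)
  (fun h => s1 * (dl C i i h m h + dl C i i h n h)) (vvac (i, i, m, n)).
apply: Lop_eqM (eqM_refl _) _ (L _ _ _).
- have -> : 2^-1 * (s1 * (dl C i i 0 m 0 + dl C i i 0 n 0)) = 0.
    by rewrite !dl_eq; case: ifP; case: ifP; rewrite ?mulr0z ?addr0 ?mulr0.
  rewrite add0r -mulr_sumr big_split /=.
  rewrite !sum_iota_dl ?leq_addr ?leq_addl //; exact: eqM_refl.
- by have := vii_mix b' a' s1 s2 m0 n0 (lexx (0 : int)); rewrite oppr0.
- by move=> h h0; apply: vii_mix m0 n0 (ltW h0).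
- move=> h Hh.
  have H1 : (h + m == 0) = false by apply/negbTE/eqP; lia.
  have H2 : (h + n == 0) = false by apply/negbTE/eqP; lia.
  by rewrite !dl_eq H1 H2 addr0 mulr0.
Qed.

End DistinctIndices.

Lemma half_neq0 : (2^-1 : C) != 0.
Proof. by rewrite invr_eq0 pnatr_eq0. Qed.

Let m1 : (-1 : int) < 0. Proof. by []. Qed.

Section Lowering.
Variables i j : 'I_d.
Hypothesis neq_ij : i != j.

Lemma Lii_vij (a b : int) (c : C) : a < 0 ->
  Lop r i i (-1) (cscale c (vvac (i, j, a, b)))
                 (cscale (c * (- a)%:~R) (vvac (i, j, a - 1, b))).
Proof.
move=> a0; have neq_ji : j != i by rewrite eq_sym.
by apply: Lop_eqM (Ljj_vij neq_ji b c a0); apply/eqM_scale/vvac_sym; rewrite neq_ji.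
Qed.

Lemma lower_vij (k l : nat) (c : C) (a b : int) : c != 0 -> a < 0 -> b < 0 ->
  exists2 c' : C, c' != 0 & exists y : combo,
    Lpow r j j (-1) k (cscale c (vvac (i, j, a, b))) y /\
    Lpow r i i (-1) l y (cscale c' (vvac (i, j, a - l%:Z, b - k%:Z))).
Proof.
move=> c0 a0 b0.
have [c2 c20 HL2] := Lpow_lower (f := fun b => vvac (i, j, a, b)) (Ljj_vij neq_ij a) k c0 b0.
have bk0 : b - k%:Z < 0 by lia.
have [c3 c30 HL3] :=
  Lpow_lower (f := fun a => vvac (i, j, a, b - k%:Z)) (Lii_vij ^~ (b - k%:Z)) l c20 a0.
by exists c3 => //; exists (cscale c2 (vvac (i, j, a, b - k%:Z))).
Qed.

Lemma vij_L_vac (m n : int) : m < 0 -> n < 0 ->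
  exists2 alpha : C, alpha != 0 &
    exists y1 y2 y3 : combo,
      [/\ Lop r i j (-2) vac y1,
          Lpow r j j (-1) (absz (- n - 1)) y1 y2,
          Lpow r i i (-1) (absz (- m - 1)) y2 y3 &
          eqM r (vvac (i, j, m, n)) (cscale alpha y3)].
Proof.
move=> m0 n0.
have [c c0 [y2 [HL2 HL3]]] := lower_vij (absz (- n - 1)) (absz (- m - 1)) half_neq0 m1 m1.
have Em : -1 - (absz (- m - 1))%:Z = m by lia.
have En : -1 - (absz (- n - 1))%:Z = n by lia.
rewrite Em En in HL3.
exists c^-1; first by rewrite invr_eq0.
exists (cscale 2^-1 (vvac (i, j, -1, -1))), y2, (cscale c (vvac (i, j, m, n))).
split=> //; first exact: Lij_vac neq_ij.
by apply: eqM_ceq => w; rewrite !coef_cscale mulrA mulVf // mul1r.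
Qed.

Lemma vii_L_vac (m n : int) : m <= -2 -> n < 0 ->
  exists2 beta : C, beta != 0 &
    exists y1 y2 y3 y4 y5 : combo,
      [/\ Lop r i j (-2) vac y1,
          Lpow r j j (-1) (absz (- m - 2)) y1 y2,
          Lpow r i i (-1) (absz (- n - 1)) y2 y3,
          Lop r i j (-1) y3 y4 /\ Lop r i i 0 y4 y5 &
          eqM r (vvac (i, i, m, n)) (cscale beta y5)].
Proof.
move=> m2 n0; have m0 : m < 0 by lia.
have [c c0 [y2 [HL2 HL3]]] := lower_vij (absz (- m - 2)) (absz (- n - 1)) half_neq0 m1 m1.
have En : -1 - (absz (- n - 1))%:Z = n by lia.
have Em : -1 - (absz (- m - 2))%:Z = m + 1 by lia.
rewrite En Em in HL3.
have mp1 : m + 1 < 0 by lia.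
have HM := Lij_vij neq_ij c n0 mp1; rewrite addrK in HM.
set s1 := 2^-1 * (c * (- (m + 1))%:~R) in HM.
have HD := Lii0_mix neq_ij (m + 1) (n - 1) s1 (2^-1 * (c * (- n)%:~R)) m0 n0.
have s10 : s1 != 0 by rewrite !mulf_neq0 ?half_neq0 ?neg_intr_neq0.
have beta0 : s1 * ((- m)%:~R + (- n)%:~R) != 0.
  by rewrite mulf_neq0 // -intrD intr_eq0; lia.
exists (s1 * ((- m)%:~R + (- n)%:~R))^-1; first by rewrite invr_eq0.
eexists _, y2, _, _, _; split; [exact: Lij_vac neq_ij | exact: HL2 | exact: HL3 |
  by split; [exact: HM | exact: HD] |].
by apply: eqM_ceq => w; rewrite !coef_cscale mulrA mulVf // mul1r.
Qed.

End Lowering.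
End InducedModule.

(* The hypothesis [hd] is implied by the existence of distinct indices. *)
Theorem lemma3p3 (C : numClosedFieldType) (d : nat) (hd : (2 <= d)%N) (r : C) :
  (forall (i j : 'I_d) (m n : int), i != j -> m < 0 -> n < 0 ->
     exists2 alpha : C, alpha != 0 &
       exists y1 y2 y3 : combo C d,
         [/\ Lop r i j (-2) (cone C d) y1,
             Lpow r j j (-1) (absz (- n - 1)) y1 y2,
             Lpow r i i (-1) (absz (- m - 1)) y2 y3 &
             eqM r (cmul (cV C (i, j, m, n)) (cone C d)) (cscale alpha y3)]) /\
  (forall (i j : 'I_d) (m n : int), j != i -> m <= -2 -> n < 0 ->
     exists2 beta : C, beta != 0 &
       exists y1 y2 y3 y4 y5 : combo C d,
         [/\ Lop r i j (-2) (cone C d) y1,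
             Lpow r j j (-1) (absz (- m - 2)) y1 y2,
             Lpow r i i (-1) (absz (- n - 1)) y2 y3,
             Lop r i j (-1) y3 y4 /\ Lop r i i 0 y4 y5 &
             eqM r (cmul (cV C (i, i, m, n)) (cone C d)) (cscale beta y5)]).
Proof.
split=> i j m n neq; first exact: vij_L_vac.
by apply: vii_L_vac; rewrite eq_sym.
Qed.
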